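(* Let $L\subseteq B_i$ be an SINR-feasible set of links in a bucket $B_i$, let $e\in B_i$, and let $L^g=\{e'\in L:d_{e'}>d_{e'e}\}$. Then $\sum_{e'\in L^g}\bar a_{e'}(e)\le C$ for a constant $C$ depending only on $\alpha,\beta,\varepsilon$.
   Context: Constants: $\alpha\ge0$, $N>0$, $\beta>0$. Nodes lie in the Euclidean plane. A link is $e=(s_e,r_e,P_e)$; $\mathcal{L}$ is the set of links. $d_e=d(s_e,r_e)$, $d_{e'e}=d(s_{e'},r_e)$, $S_e=P_e/d_e^\alpha$, $S_{e'e}=P_{e'}/d_{e'e}^\alpha$, $\gamma_e=\beta S_e/(S_e-\beta N)$, $\hat a_{e'}(e)=S_{e'e}/S_e$, $a_{e'}(e)=\gamma_e\hat a_{e'}(e)$, $\bar a_{e'}(e)=\min\{1,a_{e'}(e)\}$. $L$ is SINR-feasible if $S_e/(N+\sum_{e'\in L\setminus\{e\}}S_{e'e})\ge\beta$ for all $e\in L$. Buckets: $S_{\min}=\min_{e\in\mathcal{L}}S_e$, $B_i=\{e\in\mathcal{L}:2^iS_{\min}\le S_e<2^{i+1}S_{\min}\}$. Standing assumption: there is a constant $\varepsilon>0$ with $S_e/N\ge(1+\varepsilon)\beta$ for all $e\in\mathcal{L}$. *)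

From HB Require Import structures.
From mathcomp Require Import all_boot all_order all_algebra.
From mathcomp Require Import all_classical all_reals all_analysis.
Set Implicit Arguments. Unset Strict Implicit. Unset Printing Implicit Defensive.
Import Order.TTheory GRing.Theory Num.Theory.
Local Open Scope ring_scope.

Section SINR.
Variable R : realType.

Definition point := (R * R)%type.
Definition dist (p q : point) : R :=
  Num.sqrt ((p.1 - q.1) ^+ 2 + (p.2 - q.2) ^+ 2).

Definition link := (point * point * R)%type.
Definition sndr (e : link) : point := e.1.1.
Definition rcvr (e : link) : point := e.1.2.
Definition pw (e : link) : R := e.2.

Variables (alpha beta N : R).

Definition dlen (e : link) : R := dist (sndr e) (rcvr e).
Definition dcross (e' e : link) : R := dist (sndr e') (rcvr e).

Definition Ssig (e : link) : R := pw e / powR (dlen e) alpha.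
Definition Scross (e' e : link) : R := pw e' / powR (dcross e' e) alpha.

Definition gamma (e : link) : R := beta * Ssig e / (Ssig e - beta * N).
Definition ahat (e' e : link) : R := Scross e' e / Ssig e.
Definition aff (e' e : link) : R := gamma e * ahat e' e.
Definition abar (e' e : link) : R := Num.min 1 (aff e' e).

Definition feasible (L : seq link) : Prop :=
  forall e, e \in L ->
    beta <= Ssig e / (N + \sum_(e' <- L | e' != e) Scross e' e).

Definition Smin (Ls : seq link) : R :=
  match Ls with
  | [::] => 0
  | e0 :: _ => \big[Num.min/Ssig e0]_(e <- Ls) Ssig e
  end.

Definition bucket (Ls : seq link) (i : nat) (e : link) : bool :=
  [&& e \in Ls, 2 ^+ i * Smin Ls <= Ssig e & Ssig e < 2 ^+ i.+1 * Smin Ls].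

End SINR.

From Pilot Require Import Defs.
From HB Require Import structures.
From mathcomp Require Import all_boot all_order all_algebra.
From mathcomp Require Import all_classical all_reals all_analysis.
From mathcomp Require Import ring lra.
Import Order.TTheory GRing.Theory Num.Theory.
Local Open Scope ring_scope.

(* Since abar <= 1, the sum is at most |L^g|.  Let e' be a shortest link of
   L^g.  For any other x in L^g, going from s_x through r_e and s_e' to r_e'
   gives d(s_x, r_e') < d_x + 2 d_e' <= 3 d_x, and as x and e' lie in the same
   bucket, S_x > S_e' / 2; hence S_{x e'} >= S_e' / (2 3^alpha).  Feasibility
   of e' caps the total interference at r_e' by S_e' / beta, so at most
   2 3^alpha / beta such x exist and |L^g| <= 1 + 2 3^alpha / beta. *)

Lemma count_le_add1_predC1 {T : eqType} (P : pred T) (s : seq T) (x : T) :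
  uniq s -> (count P s <= 1 + count (fun y => (y != x) && P y) s)%N.
Proof.
move=> s_uniq; rewrite -size_filter -(count_predC (pred1 x)) -count_filter.
by rewrite leq_add2r count_uniq_mem ?filter_uniq // leq_b1.
Qed.

Lemma exists_argmin_seq {T : eqType} {d : Order.disp_t} {R : orderType d}
    (f : T -> R) (s : seq T) :
  s != [::] -> exists2 x, x \in s & forall y, y \in s -> (f x <= f y)%O.
Proof.
elim: s => // x [_ _|y s IH _].
  by exists x; rewrite ?mem_head // => y; rewrite inE => /eqP ->.
have [z zs z_min] := IH isT.
have [fxz|fzx] := leP (f x) (f z).
  exists x; first exact: mem_head.
  by move=> w; rewrite inE => /predU1P [->//|/z_min]; apply: le_trans.
exists z; first by rewrite inE zs orbT.
by move=> w; rewrite inE => /predU1P [->|/z_min //]; apply: ltW.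
Qed.

Lemma count_mul_le_sum {T : eqType} {R : numDomainType} (s : seq T)
    (P : pred T) (F : T -> R) (c : R) :
  (forall x, x \in s -> P x -> c <= F x) ->
  (count P s)%:R * c <= \sum_(x <- s | P x) F x.
Proof.
move=> c_le_F; rewrite -sum1_count natr_sum mulr_suml.
rewrite big_seq_cond [X in _ <= X]big_seq_cond; apply: ler_sum => x /andP [xs Px].
by rewrite mul1r; apply: c_le_F.
Qed.

Lemma ler_sum_andb {T : eqType} {R : numDomainType} (s : seq T)
    (P Q : pred T) (F : T -> R) :
  {in s, forall x, 0 <= F x} ->
  \sum_(x <- s | P x && Q x) F x <= \sum_(x <- s | P x) F x.
Proof.
move=> F_ge0; rewrite [X in _ <= X](bigID Q) /= lerDl big_seq_cond.
by apply: sumr_ge0 => x /andP [xs _]; apply: F_ge0.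
Qed.

Lemma cauchy_schwarz_plane {R : rcfType} (a b c d : R) :
  a * c + b * d <= Num.sqrt (a ^+ 2 + b ^+ 2) * Num.sqrt (c ^+ 2 + d ^+ 2).
Proof.
have [le0|gt0] := lerP (a * c + b * d) 0.
  by apply: le_trans le0 _; rewrite mulr_ge0 ?sqrtr_ge0.
rewrite -sqrtrM ?addr_ge0 ?sqr_ge0 // -(ger0_norm (ltW gt0)) -sqrtr_sqr.
rewrite ler_sqrt ?mulr_ge0 ?addr_ge0 ?sqr_ge0 //.
rewrite -subr_ge0 (_ : _ - _ = (a * d - b * c) ^+ 2) ?sqr_ge0 //; ring.
Qed.

Section Plane.
Context {R : realType}.

Lemma dist_sym (p q : Defs.point R) : dist p q = dist q p.
Proof. by rewrite /dist -(sqrrN (p.1 - q.1)) -(sqrrN (p.2 - q.2)) !opprB. Qed.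

Lemma dist_triangle (p q r : Defs.point R) : dist p r <= dist p q + dist q r.
Proof.
rewrite /dist.
have -> : p.1 - r.1 = (p.1 - q.1) + (q.1 - r.1) by rewrite addrA subrK.
have -> : p.2 - r.2 = (p.2 - q.2) + (q.2 - r.2) by rewrite addrA subrK.
move: (p.1 - q.1) (p.2 - q.2) (q.1 - r.1) (q.2 - r.2) => a b c d.
have := cauchy_schwarz_plane a b c d.
set u := Num.sqrt (a ^+ 2 + b ^+ 2); set v := Num.sqrt (c ^+ 2 + d ^+ 2) => cs.
have u2 : u ^+ 2 = a ^+ 2 + b ^+ 2 by rewrite sqr_sqrtr // addr_ge0 ?sqr_ge0.
have v2 : v ^+ 2 = c ^+ 2 + d ^+ 2 by rewrite sqr_sqrtr // addr_ge0 ?sqr_ge0.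
rewrite -(ger0_norm (addr_ge0 (sqrtr_ge0 _) (sqrtr_ge0 _)) : `|u + v| = u + v).
rewrite -sqrtr_sqr ler_sqrt ?sqr_ge0 //.
nra.
Qed.

Lemma dcross_le_3dlen {e e' x : link R} :
  dcross x e < dlen x -> dcross e' e < dlen e' -> dlen e' <= dlen x ->
  dcross x e' <= 3 * dlen x.
Proof.
move=> far_x far_e' e'_le_x.
have : dcross x e' <= dcross x e + dcross e' e + dlen e'.
  rewrite /dcross /dlen -addrA; apply: le_trans (dist_triangle _ (rcvr e) _) _.
  by rewrite lerD2l (dist_sym (sndr e')) dist_triangle.
lra.
Qed.

End Plane.

Section Signals.
Context {R : realType} {alpha : R}.
Hypothesis alpha_ge0 : 0 <= alpha.

Lemma pw_gt0 (x : link R) : 0 < Ssig alpha x -> 0 < pw x.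
Proof.
rewrite /Ssig; have := powR_ge0 (dlen x) alpha.
rewrite le_eqVlt => /predU1P [<-|pow_gt0]; first by rewrite invr0 mulr0 ltxx.
by rewrite pmulr_lgt0 // invr_gt0.
Qed.

Lemma Ssig_le_Scross {c : R} {x e : link R} :
  0 < c -> 0 <= pw x -> 0 < dcross x e -> dcross x e <= c * dlen x ->
  Ssig alpha x / powR c alpha <= Scross alpha x e.
Proof.
move=> c_gt0 pw_ge0 cross_gt0 cross_le.
have dlen_ge0 : 0 <= dlen x by apply: sqrtr_ge0.
have cross_pow_gt0 : 0 < powR (dcross x e) alpha by apply: powR_gt0.
have pow_le : powR (dcross x e) alpha <= powR (c * dlen x) alpha.
  by apply: ge0_ler_powR; rewrite // nnegrE ?mulr_ge0 // ltW.
rewrite /Ssig /Scross -mulrA -invfM -powRM ?(ltW c_gt0) // (mulrC (dlen x)).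
by apply: ler_wpM2l => //; rewrite lef_pV2 // posrE (lt_le_trans cross_pow_gt0).
Qed.

Lemma bucket_Ssig_lt2 {Ls : seq (link R)} {i : nat} {e f : link R} :
  bucket alpha Ls i e -> bucket alpha Ls i f -> Ssig alpha f < 2 * Ssig alpha e.
Proof.
case/and3P => _ e_lb _ /and3P [_ _ f_ub].
apply: lt_le_trans f_ub _; rewrite exprS -mulrA.
by apply: ler_wpM2l.
Qed.

Lemma feasible_interference_le {beta N : R} {L : seq (link R)} {e : link R} :
  0 <= beta -> 0 < N -> {in L, forall x, 0 <= Scross alpha x e} ->
  feasible alpha beta N L -> e \in L ->
  beta * \sum_(x <- L | x != e) Scross alpha x e <= Ssig alpha e.
Proof.
move=> beta_ge0 N_gt0 Scross_ge0 L_feas eL.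
have sum_ge0 : 0 <= \sum_(x <- L | x != e) Scross alpha x e.
  by rewrite big_seq_cond sumr_ge0 // => x /andP [xL _]; apply: Scross_ge0.
have := L_feas e eL; rewrite ler_pdivlMr ?ltr_wpDr //.
by apply: le_trans; rewrite mulrDr lerDr mulr_ge0 // ltW.
Qed.

End Signals.

Section FarLinks.
Context {R : realType} {alpha beta N : R} {Ls L : seq (link R)} {i : nat}.
Variable e : link R.
Hypotheses (alpha_ge0 : 0 <= alpha) (beta_gt0 : 0 < beta) (N_gt0 : 0 < N).
Hypothesis dcross_gt0 : forall {f f'}, f \in L -> f' \in L -> 0 < dcross f' f.
Hypothesis Ssig_gt0 : forall {f}, f \in L -> 0 < Ssig alpha f.
Hypothesis L_uniq : uniq L.
Hypothesis L_bucket : forall {f}, f \in L -> bucket alpha Ls i f.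
Hypothesis L_feasible : feasible alpha beta N L.

Let far (x : link R) := dcross x e < dlen x.

Lemma pw_ge0 {x : link R} : x \in L -> 0 <= pw x.
Proof. by move=> /Ssig_gt0 /pw_gt0 /ltW. Qed.

Lemma far_Scross_ge (e' x : link R) : e' \in L -> x \in L ->
  far e' -> far x -> dlen e' <= dlen x ->
  Ssig alpha e' / (2 * powR 3 alpha) <= Scross alpha x e'.
Proof.
move=> e'L xL far_e' far_x e'_le_x.
have T_gt0 : 0 < powR 3 alpha by apply: powR_gt0.
have cross_le := dcross_le_3dlen far_x far_e' e'_le_x.
apply: le_trans (Ssig_le_Scross alpha_ge0 _ (pw_ge0 xL) (dcross_gt0 e'L xL) cross_le) => //.
rewrite invfM mulrA ler_pM2r ?invr_gt0 // ler_pdivrMr // mulrC.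
exact: ltW (bucket_Ssig_lt2 (L_bucket xL) (L_bucket e'L)).
Qed.

Lemma count_far_le : (count far L)%:R <= 1 + 2 * powR 3 alpha / beta.
Proof.
set T := powR 3 alpha; have T_gt0 : 0 < T by apply: powR_gt0.
have [noFar|] := eqVneq [seq x <- L | far x] [::].
  by rewrite -size_filter noFar addr_ge0 // divr_ge0 ?mulr_ge0 // ltW.
move=> /(exists_argmin_seq (@dlen R)) [e' e'_far e'_min].
move: e'_far; rewrite mem_filter => /andP [far_e' e'L].
have Se'_gt0 := Ssig_gt0 e'L.
have Scross_ge0 : {in L, forall x, 0 <= Scross alpha x e'}.
  by move=> x xL; rewrite divr_ge0 ?powR_ge0 ?pw_ge0.
set c := Ssig alpha e' / (2 * T).
have c_gt0 : 0 < c by rewrite /c divr_gt0 // mulr_gt0.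
have c_le_Scross x : x \in L -> (x != e') && far x -> c <= Scross alpha x e'.
  move=> xL /andP [_ far_x]; apply: far_Scross_ge => //.
  by apply: e'_min; rewrite mem_filter far_x.
set k := count (fun x => (x != e') && far x) L.
have kc_le_S : beta * (k%:R * c) <= Ssig alpha e'.
  apply: le_trans (feasible_interference_le (ltW beta_gt0) N_gt0 Scross_ge0 L_feasible e'L).
  rewrite ler_pM2l //; apply: le_trans (count_mul_le_sum _ _ _ _ c_le_Scross) _.
  exact: (ler_sum_andb _ (fun x => x != e') far _ Scross_ge0).
have k_le : k%:R <= 2 * T / beta.
  rewrite ler_pdivlMr // mulrC -(ler_pM2r c_gt0) -mulrA.
  by rewrite [2 * T * c]mulrC /c divfK // gt_eqF // mulr_gt0.
apply: le_trans (_ : (1 + k)%:R <= _); first by rewrite ler_nat count_le_add1_predC1.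
by rewrite natrD lerD2l.
Qed.

End FarLinks.

Theorem lemma4 (R : realType) (alpha beta eps : R) :
  0 <= alpha -> 0 < beta -> 0 < eps ->
  exists C : R,
  forall (N : R) (Ls L : seq (link R)) (i : nat) (e : link R),
    0 < N ->
    (* geometric non-degeneracy: no sender sits on a receiver *)
    (forall f f', f \in Ls -> f' \in Ls -> 0 < dcross f' f) ->
    (* standing assumption *)
    (forall f, f \in Ls -> (1 + eps) * beta <= Ssig alpha f / N) ->
    uniq L ->
    {subset L <= bucket alpha Ls i} ->
    feasible alpha beta N L ->
    bucket alpha Ls i e ->
    \sum_(e' <- L | dcross e' e < dlen e') abar alpha beta N e' e <= C.
Proof.
move=> alpha_ge0 beta_gt0 eps_gt0; exists (1 + 2 * powR 3 alpha / beta).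
move=> N Ls L i e N_gt0 dcross_gt0 standing L_uniq L_bucket L_feasible _.
have L_Ls : {subset L <= Ls} by move=> x /L_bucket /and3P [].
have Ssig_gt0 : {in L, forall f, 0 < Ssig alpha f}.
  move=> f /L_Ls /standing ratio_ge.
  have ratio_gt0 : 0 < Ssig alpha f / N.
    by apply: lt_le_trans ratio_ge; rewrite mulr_gt0 ?addr_gt0.
  by rewrite -(divfK (lt0r_neq0 N_gt0) (Ssig alpha f)) mulr_gt0.
have dcross_gt0_L : {in L &, forall f f', 0 < dcross f' f}.
  by move=> f f' /L_Ls fLs /L_Ls f'Ls; apply: dcross_gt0.
apply: le_trans _ (count_far_le e alpha_ge0 beta_gt0 N_gt0 dcross_gt0_L Ssig_gt0
  L_uniq L_bucket L_feasible).
rewrite -sum1_count natr_sum; apply: ler_sum => x _.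
by rewrite /abar ge_min lexx.
Qed.
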